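(* Let $n\ge3$ and let $G$ be a spanning subgraph of $CT_n$. Then $$\sum_{x\in\mathrm{S}_n}\sum_{i=0}^{n} e(G_x^i)\ \ge\ \sum_{w\in V(G)}\binom{d_G(w)}{2}.$$
   Context: $\mathrm{S}_n$ is the symmetric group on $\{1,\dots,n\}$; $\mathrm{supp}(x)=\{i:i^x\ne i\}$. $CT_n$ has vertex set $\mathrm{S}_n$, with $\{x,y\}$ an edge iff $yx^{-1}$ is a transposition; the support of an edge $\{u,z\}$ is $\mathrm{supp}(\{u,z\})=\mathrm{supp}(zu^{-1})$. Let $\mathscr F_0$ be the set of all transpositions of $\mathrm{S}_n$ and, for $i\in\{1,\dots,n\}$, $\mathscr F_i=\{y\in\mathscr F_0: i\in\mathrm{supp}(y)\}$. Set $\delta_0=0$ and $\delta_i=1$ for $i\ge1$. For a spanning subgraph $G$ of $CT_n$, $i\in\{0,\dots,n\}$ and $x\in\mathrm{S}_n$, the graph $G_x^i$ has vertex set $\{yx: y\in\mathscr F_i\}$, and two vertices $u,z$ of it are adjacent iff $|\mathrm{supp}(\{x,u\})\cap\mathrm{supp}(\{x,z\})|=\delta_i$ and there is a vertex $w\ne x$ such that $(u,w,z)$ is a $2$-path in $G$. $d_G(w)$ is the degree of $w$ in $G$. *)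

(* Points {1..n} are modelled by 'I_n (i.e. {0..n-1}),
   S_n by {perm 'I_n}.  MathComp's product (s * t) x = t (s x) is the
   right-action composition, matching the paper's i^(yx) = (i^y)^x. *)
From mathcomp Require Import all_boot all_order all_fingroup.
Set Implicit Arguments. Unset Strict Implicit. Unset Printing Implicit Defensive.
Local Open Scope group_scope.

Section CT.
Variable n : nat.
Notation Sn := {perm 'I_n}.

Definition supp (s : Sn) : {set 'I_n} := [set i | s i != i].

Definition is_transp (s : Sn) : bool :=
  [exists a : 'I_n, exists b : 'I_n, (a != b) && (s == tperm a b)].

Definition CT_adj (x y : Sn) : bool := is_transp (y * x^-1).

Definition esupp (u z : Sn) : {set 'I_n} := supp (z * u^-1).

Definition spanning_subgraph_CT (G : rel Sn) : Prop :=
  (forall x y, G x y = G y x) /\ (forall x y, G x y -> CT_adj x y).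

(* Indices i in {0,...,n}: None stands for 0, Some k for the point k. *)
Definition Fam (i : option 'I_n) : {set Sn} :=
  match i with
  | None => [set y | is_transp y]
  | Some k => [set y | is_transp y & k \in supp y]
  end.

Definition delta (i : option 'I_n) : nat := if i is Some _ then 1 else 0.

Definition Gxi_vert (i : option 'I_n) (x : Sn) : {set Sn} :=
  [set y * x | y in Fam i].

Definition two_path (G : rel Sn) (u w z : Sn) : bool :=
  [&& G u w, G w z, u != w, w != z & u != z].

Definition Gxi_adj (G : rel Sn) (i : option 'I_n) (x u z : Sn) : bool :=
  [&& u \in Gxi_vert i x, z \in Gxi_vert i x, u != z,
      #|esupp x u :&: esupp x z| == delta i &
      [exists w, (w != x) && two_path G u w z]].

Definition e_Gxi (G : rel Sn) (i : option 'I_n) (x : Sn) : nat :=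
  #|[set E : {set Sn} | [exists u, exists z, (E == [set u; z]) && Gxi_adj G i x u z]]|.

Definition deg (G : rel Sn) (w : Sn) : nat := #|[set v | G w v]|.

End CT.

From mathcomp Require Import all_boot all_order all_fingroup.
Set Implicit Arguments. Unset Strict Implicit. Unset Printing Implicit Defensive.

(* Double counting.  The left-hand side counts the pairs (w, E) with E a
   two-element set of G-neighbours of w.  Fix E = {u, z}; let W be the common
   G-neighbours of u and z and X their common CT_n-neighbours, so W lies in X.
   For each x in X and each w in W other than x, (u, w, z) is a 2-path of G
   avoiding x, and u, z are vertices of G_x^i for i = 0 (disjoint edge
   supports) or i = k (a common moved point k: two distinct transpositions
   meet in at most one point); hence E is an edge of that G_x^i.  When W is
   nonempty, X has a second element (if u = a w, z = b w then also a b w is a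
   common neighbour), and a set X of size at least 2 contains at least #|W|
   points x with W \ {x} nonempty.  So each E is counted at least as often on
   the right as on the left, and summing over E gives the theorem.  The argument
   works for every n. *)

Section TranspositionGraph.
Variable n : nat.
Notation Sn := {perm 'I_n}.
Local Open Scope group_scope.

Lemma transpP (s : Sn) :
  reflect (exists a b, a != b /\ s = tperm a b) (is_transp s).
Proof.
apply: (iffP existsP).
  by case=> a /existsP [b /andP [ab /eqP ->]]; exists a, b.
by case=> a [b [ab ->]]; exists a; apply/existsP; exists b; rewrite ab eqxx.
Qed.

Lemma not_transp1 : ~~ is_transp (1 : Sn).
Proof.
apply/transpP => -[a [b [ab /permP /(_ a)]]].
by rewrite tpermL perm1 => ba; rewrite ba eqxx in ab.
Qed.

Lemma transpV (s : Sn) : is_transp s -> s^-1 = s.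
Proof. by case/transpP=> a [b [ab ->]]; rewrite tpermV. Qed.

Lemma transpJ (s t : Sn) : is_transp s -> is_transp (s ^ t).
Proof.
case/transpP=> a [b [ab ->]]; apply/transpP; exists (t a), (t b).
by rewrite tpermJ (inj_eq perm_inj).
Qed.

Lemma supp_tperm (a b : 'I_n) : a != b -> supp (tperm a b) = [set a; b].
Proof.
move=> ab; apply/setP => k; rewrite /supp !inE.
have [->|ka] := eqVneq k a; first by rewrite tpermL eq_sym ab.
have [->|kb] := eqVneq k b; first by rewrite tpermR ab orbT.
by rewrite tpermD ?eqxx // eq_sym.
Qed.

Lemma tperm_set2 (a b c d : 'I_n) : a != b ->
  [set a; b] = [set c; d] -> tperm a b = tperm c d.
Proof.
move=> ab E.
have /set2P [] : a \in [set c; d] by rewrite -E set21.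
all: have /set2P [] : b \in [set c; d] by rewrite -E set22.
all: move=> eb ea; rewrite ea eb ?eqxx // in ab *.
exact: tpermC.
Qed.

Lemma card_supp_meet (s t : Sn) : is_transp s -> is_transp t -> s != t ->
  #|supp s :&: supp t| <= 1.
Proof.
case/transpP=> a [b [ab ->]]; case/transpP=> c [d [cd ->]].
rewrite (supp_tperm ab) (supp_tperm cd) leqNgt; apply: contra => two.
have meetL : [set a; b] :&: [set c; d] = [set a; b].
  by apply/eqP; rewrite eqEcard subsetIl cards2 ab.
have meetR : [set a; b] :&: [set c; d] = [set c; d].
  by apply/eqP; rewrite eqEcard subsetIr cards2 cd.
by apply/eqP/tperm_set2 => //; rewrite -meetL meetR.
Qed.

Lemma Gxi_vertE (i : option 'I_n) (x u : Sn) :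
  (u \in Gxi_vert i x) = (u * x^-1 \in Fam i).
Proof.
apply/imsetP/idP => [[y yF ->]|uF]; first by rewrite mulgK.
by exists (u * x^-1); rewrite ?mulgVK.
Qed.

(* Two distinct CT_n-neighbours u, z of x are vertices of a common G_x^i
   whose support condition they satisfy: i = 0 if the supports of the
   edges xu and xz are disjoint, and i = k for k a common moved point
   otherwise (then the supports share exactly the point k). *)
Lemma Gxi_vert_pair (x u z : Sn) : u != z -> CT_adj x u -> CT_adj x z ->
  exists i, [&& u \in Gxi_vert i x, z \in Gxi_vert i x &
                #|esupp x u :&: esupp x z| == delta i].
Proof.
rewrite /CT_adj /esupp => uz tu tz.
have ne : u * x^-1 != z * x^-1 by apply: contra uz => /eqP /mulIg ->.
have [disj|] := eqVneq (supp (u * x^-1) :&: supp (z * x^-1)) set0.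
  by exists None; rewrite !Gxi_vertE !inE tu tz disj cards0.
move=> meet; case/set0Pn: (meet) => k /setIP [ku kz].
exists (Some k); rewrite !Gxi_vertE !inE tu tz.
move: ku kz; rewrite !inE => -> -> /=.
by rewrite eqn_leq card_supp_meet // card_gt0.
Qed.

(* Two distinct vertices with a common CT_n-neighbour w have a second
   common CT_n-neighbour: writing u = a w, z = b w with transpositions
   a, b, the vertex a b w works. *)
Lemma second_common_nbr (w u z : Sn) : u != z -> CT_adj w u -> CT_adj w z ->
  exists2 x, x != w & CT_adj x u && CT_adj x z.
Proof.
rewrite /CT_adj => uz ta tb.
have [ua zb] : u = (u * w^-1) * w /\ z = (z * w^-1) * w by rewrite !mulgVK.
move: (u * w^-1) (z * w^-1) ta tb ua zb => a b ta tb -> -> in uz *.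
exists (a * b * w).
  apply: contra uz => /eqP /(canRL (mulgK w)); rewrite mulgV => /mulg1_eq.
  by rewrite (transpV ta) => ->.
apply/andP; split.
  have -> : a * w * (a * b * w)^-1 = (b^-1) ^ (a^-1).
    by rewrite !invMg !mulgA mulgK conjgE invgK !mulgA.
  by apply: transpJ; rewrite transpV.
have -> : b * w * (a * b * w)^-1 = a^-1.
  by rewrite !invMg !mulgA mulgK mulgV mul1g.
by rewrite transpV.
Qed.

End TranspositionGraph.

Lemma card_sum_mem (T : finType) (A : {set T}) : #|A| = \sum_(t : T) (t \in A).
Proof. by rewrite -sum1_card big_mkcond; apply: eq_bigr => t _; case: (t \in A). Qed.

Lemma binomial2_subsets (T : finType) (A : {set T}) :
  'C(#|A|, 2) = \sum_(E : {set T}) ((E \subset A) && (#|E| == 2)).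
Proof. by rewrite -cards_draws card_sum_mem; apply: eq_bigr => E _; rewrite inE. Qed.

Lemma card_le_others (T : finType) (X W : {set T}) : W \subset X -> 1 < #|X| ->
  #|W| <= #|[set x in X | W :\ x != set0]|.
Proof.
move=> WX X2; have [W_small|W_big] := leqP #|W| 1; last first.
  apply: leq_trans (subset_leq_card WX) (subset_leq_card _).
  apply/subsetP => x xX; rewrite inE xX -card_gt0.
  move: W_big; rewrite (cardsD1 x W).
  by case: (x \in W); [rewrite add1n ltnS | rewrite add0n => /ltnW].
have [->|[w0 w0W]] := set_0Vmem W; first by rewrite cards0.
have W1 : W = [set w0] by apply/eqP; rewrite eq_sym eqEcard sub1set w0W cards1.
rewrite W1 cards1; apply: leq_trans (_ : 0 < #|X :\ w0|) (subset_leq_card _).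
  by move: X2; rewrite (cardsD1 w0 X) (subsetP WX _ w0W) add1n ltnS.
apply/subsetP => x /setD1P [xw0 xX]; rewrite inE xX; apply/set0Pn.
by exists w0; rewrite !inE eq_sym xw0 eqxx.
Qed.

Section SpanningSubgraph.
Variables (n : nat) (G : rel {perm 'I_n}).
Notation Sn := {perm 'I_n}.
Hypothesis Gsym : forall x y, G x y = G y x.
Hypothesis GCT : forall x y, G x y -> CT_adj x y.
Local Open Scope group_scope.

Lemma G_irrefl (w : Sn) : G w w = false.
Proof.
by apply/negP => /GCT; rewrite /CT_adj mulgV; apply/negP/not_transp1.
Qed.

Definition Gxi_edge (i : option 'I_n) (x : Sn) (E : {set Sn}) : bool :=
  [exists u, exists z, (E == [set u; z]) && Gxi_adj G i x u z].

Lemma e_GxiE (i : option 'I_n) (x : Sn) :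
  e_Gxi G i x = (\sum_(E : {set Sn}) Gxi_edge i x E)%N.
Proof. by rewrite /e_Gxi card_sum_mem; apply: eq_bigr => E _; rewrite inE. Qed.

Lemma Gxi_edge_common_nbr (u z w x : Sn) : u != z -> G w u -> G w z ->
  w != x -> CT_adj x u -> CT_adj x z -> exists i, Gxi_edge i x [set u; z].
Proof.
move=> uz Gwu Gwz wx xu xz.
have [i /and3P [ui zi meet]] := Gxi_vert_pair uz xu xz.
exists i; apply/existsP; exists u; apply/existsP; exists z.
rewrite eqxx /Gxi_adj ui zi uz meet /=; apply/existsP; exists w.
rewrite wx /two_path Gsym Gwu Gwz uz andbT /=.
by apply/andP; split; [apply: contraTneq Gwu => -> | apply: contraTneq Gwz => <-];
  rewrite G_irrefl.
Qed.

(* With W the common G-neighbours and X the common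
   CT_n-neighbours of E = {u, z}, every x in X missing some point of W
   contributes an edge, and there are at least #|W| such x. *)
Lemma pair_count (E : {set Sn}) :
  (\sum_(w : Sn) ((E \subset [set v | G w v]) && (#|E| == 2))
    <= \sum_(x : Sn) \sum_(i : option 'I_n) Gxi_edge i x E)%N.
Proof.
have [/cards2P [u [z [uz ->]]]|E2] := boolP (#|E| == 2); last first.
  by rewrite big1 // => w _; rewrite andbF.
set W := [set w | G w u && G w z].
set X := [set x | CT_adj x u && CT_adj x z].
have -> : (\sum_(w : Sn) (([set u; z] \subset [set v | G w v]) && true)
            = #|W|)%N.
  rewrite card_sum_mem; apply: eq_bigr => w _.
  by rewrite subUset !sub1set !inE andbT.
have WX : W \subset X.
  by apply/subsetP => w; rewrite !inE => /andP [/GCT -> /GCT ->].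
have [->|[w0 w0W]] := set_0Vmem W; first by rewrite cards0.
have X2 : (1 < #|X|)%N.
  have := subsetP WX w0 w0W; rewrite inE => /andP [w0u w0z].
  have [x xw0 xX] := second_common_nbr uz w0u w0z.
  rewrite (cardsD1 w0) (subsetP WX) // add1n ltnS card_gt0.
  by apply/set0Pn; exists x; rewrite !inE xw0.
apply: leq_trans (card_le_others WX X2) _.
rewrite card_sum_mem; apply: leq_sum => x _.
case: setIdP => // -[xX /set0Pn [w]]; case/setIdP: xX => xu xz.
rewrite !inE => /and3P [wx Gwu Gwz].
have [i Ei] := Gxi_edge_common_nbr uz Gwu Gwz wx xu xz.
by rewrite (bigD1 i) //= Ei.
Qed.

End SpanningSubgraph.

Theorem mainTheorem7 (n : nat) (G : rel {perm 'I_n}) :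
  3 <= n -> spanning_subgraph_CT G ->
  \sum_(w : {perm 'I_n}) 'C(deg G w, 2)
    <= \sum_(x : {perm 'I_n}) \sum_(i : option 'I_n) e_Gxi G i x.
Proof.
move=> _ [Gsym GCT].
rewrite (eq_bigr _ (fun w _ => binomial2_subsets _)) exchange_big /=.
apply: leq_trans (leq_sum _ (fun E _ => pair_count Gsym GCT E)) _.
rewrite exchange_big; apply: leq_sum => x _.
by rewrite exchange_big; apply/eq_leq/eq_bigr => i _; rewrite e_GxiE.
Qed.
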